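(* For each $t\in[0,1)$ the operator $C_t\colon H^\infty\to H^\infty$ is continuous. Moreover, $\|C_0\|_{H^\infty\to H^\infty}=1$ and $\|C_t\|_{H^\infty\to H^\infty}=-\frac{\log(1-t)}{t}$ for every $t\in(0,1)$.
   Context: $\mathbb{D}=\{z\in\mathbb{C}:|z|<1\}$; $H^\infty$ is the Banach space of bounded holomorphic functions on $\mathbb{D}$ with norm $\|f\|_\infty=\sup_{z\in\mathbb{D}}|f(z)|$. For $t\in[0,1]$ the generalized Cesàro operator $C_t$ is defined on holomorphic $f$ on $\mathbb{D}$ by $C_tf(0)=f(0)$ and $C_tf(z)=\frac{1}{z}\int_0^z\frac{f(\xi)}{1-t\xi}\,d\xi$ for $z\in\mathbb{D}\setminus\{0\}$. *)

From Stdlib Require Import Reals.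
From Coquelicot Require Import Coquelicot.
Open Scope R_scope.

Definition in_disc (z : C) : Prop := Cmod z < 1.

Definition holomorphic_on_disc (f : C -> C) : Prop :=
  forall z : C, in_disc z -> ex_derive (K := C_AbsRing) (V := C_NormedModule) f z.

Definition Hinf (f : C -> C) : Prop :=
  holomorphic_on_disc f /\ exists M : R, forall z : C, in_disc z -> Cmod (f z) <= M.

(* Sup norm over the disc (meaningful for bounded f). *)
Definition supnorm (f : C -> C) : R :=
  real (Lub_Rbar (fun r => exists z : C, in_disc z /\ r = Cmod (f z))).

(* Generalized Cesaro operator:  C_t f(0) = f(0) and, for z <> 0,
   C_t f(z) = (1/z) * int_{[0,z]} f(xi)/(1 - t xi) d xi, the line integral
   along the segment [0,z] parametrized by xi = s z, s in [0,1]. *)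
Definition cesaro (t : R) (f : C -> C) (z : C) : C :=
  if Req_EM_T (Cmod z) 0 then f (RtoC 0)
  else Cmult (Cinv z)
         (@RInt C_R_CompleteNormedModule
            (fun s : R => Cmult (Cdiv (f (Cmult (RtoC s) z))
                                      (Cminus (RtoC 1) (Cmult (RtoC t) (Cmult (RtoC s) z))))
                                z)
            0 1).

Definition cesaro_opnorm_is (t N : R) : Prop :=
  is_lub (fun r => exists f : C -> C, Hinf f /\ supnorm f <= 1 /\ r = supnorm (cesaro t f)) N.

From Stdlib Require Import Reals Lra Lia.
From Coquelicot Require Import Coquelicot.
Open Scope R_scope.

(* Put h = f / (1 - t xi).  For z <> 0, C_t f (z) = (1/z) * int_[0,z] h is the
   mean of h over the segment [0,z], so |C_t f| <= ||f|| * K_t with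
   K_t = int_0^1 ds / (1 - t s), which is 1 for t = 0 and -log(1-t)/t otherwise;
   the bound is approached by C_t 1 at real points r -> 1.  By linearity C_t is
   K_t-Lipschitz in the sup norm.  Holomorphy of C_t f away from 0 follows because
   z |-> int_[0,z] h is a primitive of h, which rests on Goursat's theorem for
   triangles in the disc (proved by repeated quadrisection); at 0 it is checked
   directly, the derivative being h'(0)/2. *)

Local Notation is_Cderive f z l := (@is_derive C_AbsRing C_NormedModule f z l).

(* Equalities between values of [C_R_NormedModule] are not seen by [ring]/[field]
   as equalities in [C] until their type is changed. *)
Ltac C_eq := match goal with |- ?x = ?y => change (@eq C x y) end.

Lemma CR_normE (x : C) : @norm R_AbsRing C_R_NormedModule x = Cmod x.
Proof.
  destruct x as [a b]; unfold norm; simpl; unfold prod_norm, Cmod; simpl.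
  change (norm a) with (Rabs a); change (norm b) with (Rabs b).
  rewrite !Rmult_1_r, <- !Rabs_mult, !Rabs_right by nra; reflexivity.
Qed.

Lemma CR_plusE (x y : C) : @plus C_R_NormedModule x y = (x + y)%C.
Proof. reflexivity. Qed.

Lemma CR_minusE (x y : C) : @minus C_R_NormedModule x y = (x - y)%C.
Proof. reflexivity. Qed.

Lemma CR_oppE (x : C) : @opp C_R_NormedModule x = (- x)%C.
Proof. reflexivity. Qed.

Lemma scal_R_mult (x y : R) : scal x y = x * y.
Proof. reflexivity. Qed.

Lemma Cmod_sub_sym (a b : C) : Cmod (a - b) = Cmod (b - a).
Proof. replace (a - b)%C with (- (b - a))%C by ring. apply Cmod_opp. Qed.

Lemma Cmod_sub_triangle (a b c : C) : Cmod (a - c) <= Cmod (a - b) + Cmod (b - c).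
Proof. replace (a - c)%C with ((a - b) + (b - c))%C by ring. apply Cmod_triangle. Qed.

Lemma Cmod_sub_lower (w z : C) : Cmod z - Cmod (w - z) <= Cmod w.
Proof.
  assert (H := Cmod_triangle w (z - w)%C).
  replace (w + (z - w))%C with z in H by ring. rewrite Cmod_sub_sym in H. lra.
Qed.

Lemma Cmod_RtoC_nonneg (r : R) : 0 <= r -> Cmod (RtoC r) = r.
Proof. intros. rewrite Cmod_R. apply Rabs_right. lra. Qed.

Lemma Cmod_scal_le (s : R) (x : C) : 0 <= s <= 1 -> Cmod (RtoC s * x) <= Cmod x.
Proof.
  intros Hs. rewrite Cmod_mult, Cmod_RtoC_nonneg by lra.
  assert (H := Cmod_ge_0 x). nra.
Qed.

Lemma in_disc_0 : in_disc 0.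
Proof. unfold in_disc. rewrite Cmod_0. lra. Qed.

(** * Complex derivatives *)

Lemma is_Cderive_epsilon (f : C -> C) (z l : C) :
  is_Cderive f z l <->
  forall eps, 0 < eps -> exists d, 0 < d /\ forall w, Cmod (w - z) < d ->
    Cmod (f w - f z - l * (w - z)) <= eps * Cmod (w - z).
Proof.
  assert (E : forall w, @norm C_AbsRing C_NormedModule
                (minus (minus (f w) (f z)) (scal (minus w z) l))
              = Cmod (f w - f z - l * (w - z))).
  { intros w. unfold minus, plus, opp, scal; simpl. unfold mult; simpl.
    apply (f_equal Cmod). ring. }
  split.
  - intros [_ H] eps Heps.
    destruct (H z (fun P HP => HP) (mkposreal eps Heps)) as [d Hd].
    exists d. split; [apply cond_pos|]. intros w Hw.
    specialize (Hd w Hw). rewrite E in Hd. exact Hd.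
  - intros H. split; [apply (@is_linear_scal_l C_AbsRing C_NormedModule)|].
    intros x Hx eps.
    apply (@is_filter_lim_locally_unique C_AbsRing (AbsRing_NormedModule C_AbsRing)) in Hx.
    subst x.
    destruct (H eps (cond_pos eps)) as [d [Hd Hw]].
    exists (mkposreal d Hd). intros w Hb. rewrite E. exact (Hw w Hb).
Qed.

Definition Ccontinuous_at (g : C -> C) (z : C) : Prop :=
  forall eps, 0 < eps -> exists d, 0 < d /\
    forall w, Cmod (w - z) < d -> Cmod (g w - g z) < eps.

Definition Ccontinuous_on_disc (g : C -> C) : Prop :=
  forall w, in_disc w -> Ccontinuous_at g w.

Lemma is_Cderive_continuous (f : C -> C) (z l : C) :
  is_Cderive f z l -> Ccontinuous_at f z.
Proof.
  intros H eps Heps.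
  destruct (proj1 (is_Cderive_epsilon f z l) H 1 Rlt_0_1) as [d [Hd Hw]].
  assert (Hl := Cmod_ge_0 l).
  exists (Rmin d (eps / (Cmod l + 2))). split.
  { apply Rmin_pos; [lra | apply Rdiv_lt_0_compat; lra]. }
  intros w Hwz.
  assert (H1 : Cmod (w - z) < d) by (eapply Rlt_le_trans; [exact Hwz | apply Rmin_l]).
  assert (H2 : Cmod (w - z) * (Cmod l + 2) < eps).
  { apply (Rlt_le_trans _ (eps / (Cmod l + 2) * (Cmod l + 2))).
    - apply Rmult_lt_compat_r; [lra|]. eapply Rlt_le_trans; [exact Hwz | apply Rmin_r].
    - right. field. lra. }
  specialize (Hw w H1).
  replace (f w - f z)%C with ((f w - f z - l * (w - z)) + l * (w - z))%C by ring.
  eapply Rle_lt_trans; [apply Cmod_triangle|]. rewrite Cmod_mult.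
  assert (Hp := Cmod_ge_0 (w - z)). nra.
Qed.

Lemma holomorphic_continuous (f : C -> C) :
  holomorphic_on_disc f -> Ccontinuous_on_disc f.
Proof. intros H w Hw. destruct (H w Hw) as [l Hl]. exact (is_Cderive_continuous f w l Hl). Qed.

Lemma is_Cderive_AbsRing (f : C -> C) (z l : C) :
  is_Cderive f z l <-> @is_derive C_AbsRing (AbsRing_NormedModule C_AbsRing) f z l.
Proof.
  split; intros [_ H]; split; try exact H.
  - apply (@is_linear_scal_l C_AbsRing (AbsRing_NormedModule C_AbsRing)).
  - apply (@is_linear_scal_l C_AbsRing C_NormedModule).
Qed.

Lemma is_Cderive_mult (f g : C -> C) (z df dg : C) :
  is_Cderive f z df -> is_Cderive g z dg ->
  is_Cderive (fun w => f w * g w)%C z (df * g z + f z * dg)%C.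
Proof.
  intros Hf Hg. apply (proj2 (is_Cderive_AbsRing _ _ _)).
  apply (@is_derive_mult C_AbsRing f g z df dg);
    [apply is_Cderive_AbsRing; assumption .. | exact Cmult_comm].
Qed.

Lemma is_Cderive_comp (f g : C -> C) (z df dg : C) :
  is_Cderive f (g z) df -> is_Cderive g z dg ->
  is_Cderive (fun w => f (g w)) z (dg * df)%C.
Proof.
  intros Hf Hg. exact (@is_derive_comp C_AbsRing C_NormedModule f g z df dg Hf
                         (proj1 (is_Cderive_AbsRing g z dg) Hg)).
Qed.

Lemma is_Cderive_affine (a b z : C) : is_Cderive (fun w => a + b * w)%C z b.
Proof.
  apply is_Cderive_epsilon. intros eps He. exists 1. split; [lra|]. intros w _.
  replace (a + b * w - (a + b * z) - b * (w - z))%C with (RtoC 0) by ring.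
  rewrite Cmod_0. assert (H := Cmod_ge_0 (w - z)). nra.
Qed.

(* Near [z], [|w| >= |z|/2], so the remainder [(w-z)^2 / (w z^2)] is
   at most [2 |w-z|^2 / |z|^3]. *)
Lemma is_Cderive_inv (z : C) : z <> 0%C -> is_Cderive Cinv z (- / (z * z))%C.
Proof.
  intros Hz. apply is_Cderive_epsilon. intros eps He.
  assert (Hm : 0 < Cmod z) by (apply Cmod_gt_0; auto).
  set (m := Cmod z) in *.
  assert (Hm3 : 0 < m * m * m) by (repeat apply Rmult_lt_0_compat; lra).
  exists (Rmin (m / 2) (eps * (m * m * m) / 2)). split.
  { apply Rmin_pos; [lra | apply Rdiv_lt_0_compat; [apply Rmult_lt_0_compat|]; lra]. }
  intros w Hw.
  assert (H1 : Cmod (w - z) < m / 2) by (eapply Rlt_le_trans; [exact Hw | apply Rmin_l]).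
  assert (H2 : Cmod (w - z) < eps * (m * m * m) / 2)
    by (eapply Rlt_le_trans; [exact Hw | apply Rmin_r]).
  assert (Hw2 : m / 2 < Cmod w) by (assert (H := Cmod_sub_lower w z); unfold m in *; lra).
  assert (Hw0 : w <> 0%C) by (apply Cmod_gt_0; lra).
  replace (/ w - / z - - / (z * z) * (w - z))%C with ((w - z) * (w - z) * / (w * (z * z)))%C
    by (field; auto).
  rewrite !Cmod_mult, Cmod_inv, !Cmod_mult by (apply Cmult_neq_0; auto; apply Cmult_neq_0; auto).
  fold m. set (d := Cmod (w - z)) in *. set (n := Cmod w) in *.
  assert (Hd := Cmod_ge_0 (w - z)). fold d in Hd.
  assert (Hinv : / (n * (m * m)) <= 2 / (m * m * m)).
  { replace (2 / (m * m * m)) with (/ (m / 2 * (m * m))) by (field; lra).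
    apply Rinv_le_contravar; [apply Rmult_lt_0_compat; nra|].
    apply Rmult_le_compat_r; nra. }
  assert (Hd2 : d * (2 / (m * m * m)) <= eps).
  { apply (Rmult_le_reg_r (m * m * m)); auto.
    replace (d * (2 / (m * m * m)) * (m * m * m)) with (2 * d) by (field; lra). lra. }
  assert (Hi0 : 0 <= / (n * (m * m))) by (apply Rlt_le, Rinv_0_lt_compat; nra).
  apply Rle_trans with (d * (d * (2 / (m * m * m)))); [|nra].
  rewrite Rmult_assoc. apply Rmult_le_compat_l; auto. apply Rmult_le_compat_l; auto.
Qed.

(** * Integrals along segments *)

Definition seg (a b : C) (s : R) : C := (a + RtoC s * (b - a))%C.

Definition seg_int (g : C -> C) (a b : C) : C :=
  @RInt C_R_CompleteNormedModule (fun s => (g (seg a b s) * (b - a))%C) 0 1.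

Definition mid (a b : C) : C := seg a b (1/2).

Lemma seg_0 (a b : C) : seg a b 0 = a.
Proof. unfold seg. ring. Qed.

Lemma seg_1 (a b : C) : seg a b 1 = b.
Proof. unfold seg. ring. Qed.

Lemma seg_convex_le (a b : C) (s : R) : 0 <= s <= 1 ->
  Cmod (seg a b s) <= (1 - s) * Cmod a + s * Cmod b.
Proof.
  intros Hs. unfold seg.
  replace (a + RtoC s * (b - a))%C with (RtoC (1 - s) * a + RtoC s * b)%C
    by (rewrite RtoC_minus; ring).
  eapply Rle_trans; [apply Cmod_triangle|].
  rewrite !Cmod_mult, !Cmod_RtoC_nonneg by lra. lra.
Qed.

Lemma seg_le (a b : C) (s r : R) : 0 <= s <= 1 ->
  Cmod a <= r -> Cmod b <= r -> Cmod (seg a b s) <= r.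
Proof. intros Hs Ha Hb. eapply Rle_trans; [apply seg_convex_le; auto|]. nra. Qed.

Lemma seg_in_disc (a b : C) (s : R) : 0 <= s <= 1 ->
  in_disc a -> in_disc b -> in_disc (seg a b s).
Proof.
  unfold in_disc. intros Hs Ha Hb. eapply Rle_lt_trans; [apply seg_convex_le; auto|].
  assert (H1 := Cmod_ge_0 a). assert (H2 := Cmod_ge_0 b).
  destruct (Rle_lt_dec s (1/2)); nra.
Qed.

Lemma seg_sub (a b : C) (s u : R) : (seg a b s - seg a b u)%C = (RtoC (s - u) * (b - a))%C.
Proof. unfold seg. rewrite RtoC_minus. ring. Qed.

Lemma seg_sub_start_le (a b : C) (s : R) : 0 <= s <= 1 -> Cmod (seg a b s - a) <= Cmod (b - a).
Proof.
  intros Hs. unfold seg. replace (a + RtoC s * (b - a) - a)%C with (RtoC s * (b - a))%C by ring.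
  apply Cmod_scal_le; auto.
Qed.

Lemma seg_affine (a b : C) (u v y : R) :
  seg (seg a b u) (seg a b v) y = seg a b ((v - u) * y + u).
Proof. unfold seg. rewrite RtoC_plus, !RtoC_mult, RtoC_minus. ring. Qed.

Lemma continuous_seg_integrand (g : C -> C) (a b : C) (s0 : R) :
  Ccontinuous_at g (seg a b s0) ->
  @continuous R_UniformSpace C_R_NormedModule (fun s => (g (seg a b s) * (b - a))%C) s0.
Proof.
  intros Hg. apply (filterlim_locally (F := locally s0)). intros eps.
  set (k := Cmod (b - a) + 1).
  assert (Hk : 0 < k) by (assert (H := Cmod_ge_0 (b - a)); unfold k; lra).
  destruct (Hg (eps / k)) as [d [Hd Hw]]; [apply Rdiv_lt_0_compat; [apply cond_pos | lra]|].
  assert (Hdk : 0 < d / k) by (apply Rdiv_lt_0_compat; lra).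
  exists (mkposreal _ Hdk). intros s Hs.
  apply (@norm_compat1 R_AbsRing C_R_NormedModule).
  rewrite CR_normE, CR_minusE.
  change (Rabs (s - s0) < d / k) in Hs.
  replace (g (seg a b s) * (b - a) - g (seg a b s0) * (b - a))%C
    with ((g (seg a b s) - g (seg a b s0)) * (b - a))%C by ring.
  assert (Hba : Cmod (b - a) < k) by (unfold k; lra).
  assert (Hs' : Cmod (seg a b s - seg a b s0) < d).
  { rewrite seg_sub, Cmod_mult, Cmod_R.
    assert (E : d / k * k = d) by (field; lra).
    assert (H0 := Rabs_pos (s - s0)). assert (H1 := Cmod_ge_0 (b - a)). nra. }
  specialize (Hw _ Hs'). rewrite Cmod_mult.
  assert (E : eps / k * k = eps) by (field; lra).
  assert (H0 := Cmod_ge_0 (g (seg a b s) - g (seg a b s0))). assert (H1 := Cmod_ge_0 (b - a)).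
  nra.
Qed.

Lemma mid_comm (a b : C) : mid a b = mid b a.
Proof. unfold mid, seg. rewrite RtoC_div by lra. field. Qed.

Lemma mid_sub_l (a b : C) : (mid a b - a)%C = (RtoC (1/2) * (b - a))%C.
Proof. unfold mid, seg. ring. Qed.

Lemma mid_sub_r (a b : C) : (b - mid a b)%C = (RtoC (1/2) * (b - a))%C.
Proof. unfold mid, seg. rewrite RtoC_div by lra. field. Qed.

Lemma mid_sub_mid (a b c : C) : (mid a b - mid b c)%C = (RtoC (1/2) * (a - c))%C.
Proof. unfold mid, seg. rewrite RtoC_div by lra. field. Qed.

Lemma Cmod_half (x : C) : Cmod (RtoC (1/2) * x) = Cmod x / 2.
Proof. rewrite Cmod_mult, Cmod_RtoC_nonneg by lra. field. Qed.

Definition affine (al be c w : C) : C := (al + be * (w - c))%C.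
Definition affine_prim (al be c w : C) : C := (al * w + RtoC (1/2) * be * (w - c) * (w - c))%C.

Lemma is_RInt_scal_id (x : C) :
  @is_RInt C_R_NormedModule (fun s => scal s x) 0 1 (scal (1/2) x).
Proof.
  replace (scal (1/2) x) with (minus (scal (1 * 1 / 2) x) (scal (0 * 0 / 2) x) : C_R_NormedModule)
    by (rewrite CR_minusE, !scal_R_Cmult;
        replace (1 * 1 / 2) with (1 / 2) by field; replace (0 * 0 / 2) with 0 by field; C_eq; ring).
  apply (@is_RInt_derive C_R_CompleteNormedModule (fun s => scal (s * s / 2) x)).
  - intros s _. apply (@is_derive_scal_l R_AbsRing C_R_NormedModule).
    auto_derive; auto. field.
  - intros s _. apply (@continuous_scal_l R_UniformSpace R_AbsRing C_R_NormedModule), continuous_id.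
Qed.

Lemma is_RInt_seg_affine (al be c a b : C) :
  @is_RInt C_R_NormedModule (fun s => (affine al be c (seg a b s) * (b - a))%C) 0 1
    (affine_prim al be c b - affine_prim al be c a)%C.
Proof.
  set (x0 := ((al + be * (a - c)) * (b - a))%C).
  set (x1 := (be * (b - a) * (b - a))%C).
  assert (H := @is_RInt_plus C_R_NormedModule (fun _ => x0) (fun s => scal s x1) 0 1 _ _
                 (@is_RInt_const C_R_NormedModule 0 1 x0) (is_RInt_scal_id x1)).
  replace (affine_prim al be c b - affine_prim al be c a)%C
    with (plus (scal (1 - 0) x0) (scal (1/2) x1) : C_R_NormedModule).
  - apply (@is_RInt_ext C_R_NormedModule) with (2 := H). intros s _.
    rewrite CR_plusE, scal_R_Cmult. unfold x0, x1, affine, seg. C_eq; ring.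
  - rewrite CR_plusE, !scal_R_Cmult. unfold x0, x1, affine_prim.
    C_eq.
    rewrite RtoC_minus, RtoC_div by lra. field.
Qed.

Section SegmentIntegrals.

Variable g : C -> C.
Hypothesis g_cont : Ccontinuous_on_disc g.

Lemma ex_RInt_seg (a b : C) (u v : R) :
  in_disc a -> in_disc b -> 0 <= u <= 1 -> 0 <= v <= 1 ->
  @ex_RInt C_R_NormedModule (fun s => (g (seg a b s) * (b - a))%C) u v.
Proof.
  intros Ha Hb Hu Hv. apply (@ex_RInt_continuous C_R_CompleteNormedModule).
  intros s Hs. apply continuous_seg_integrand, g_cont, seg_in_disc; auto.
  split; [apply Rle_trans with (Rmin u v) | apply Rle_trans with (Rmax u v)]; try tauto.
  - apply Rmin_glb; lra.
  - apply Rmax_lub; lra.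
Qed.

Lemma is_RInt_seg_int (a b : C) : in_disc a -> in_disc b ->
  @is_RInt C_R_NormedModule (fun s => (g (seg a b s) * (b - a))%C) 0 1 (seg_int g a b).
Proof.
  intros Ha Hb. apply (@RInt_correct C_R_CompleteNormedModule), ex_RInt_seg; auto; lra.
Qed.

Lemma seg_int_subseg (a b : C) (u v : R) :
  in_disc a -> in_disc b -> 0 <= u <= 1 -> 0 <= v <= 1 ->
  seg_int g (seg a b u) (seg a b v) =
  @RInt C_R_CompleteNormedModule (fun s => (g (seg a b s) * (b - a))%C) u v.
Proof.
  intros Ha Hb Hu Hv.
  set (F := fun s => (g (seg a b s) * (b - a))%C).
  replace u with ((v - u) * 0 + u) at 2 by ring.
  replace v with ((v - u) * 1 + u) at 3 by ring.
  rewrite <- (@RInt_comp_lin C_R_CompleteNormedModule).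
  - apply (@RInt_ext C_R_CompleteNormedModule). intros y _.
    rewrite scal_R_Cmult, seg_affine. unfold F. rewrite seg_sub, RtoC_minus. C_eq; ring.
  - replace ((v - u) * 0 + u) with u by ring. replace ((v - u) * 1 + u) with v by ring.
    apply ex_RInt_seg; auto.
Qed.

Lemma seg_int_split (a b : C) : in_disc a -> in_disc b ->
  seg_int g a b = (seg_int g a (mid a b) + seg_int g (mid a b) b)%C.
Proof.
  intros Ha Hb. unfold mid.
  replace (seg_int g a b) with (seg_int g (seg a b 0) (seg a b 1)) by now rewrite seg_0, seg_1.
  replace (seg_int g a (seg a b (1/2))) with (seg_int g (seg a b 0) (seg a b (1/2)))
    by now rewrite seg_0.
  replace (seg_int g (seg a b (1/2)) b) with (seg_int g (seg a b (1/2)) (seg a b 1))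
    by now rewrite seg_1.
  rewrite !seg_int_subseg, <- CR_plusE by (auto; lra).
  apply eq_sym, (@RInt_Chasles C_R_CompleteNormedModule); apply ex_RInt_seg; auto; lra.
Qed.

Lemma seg_int_swap (a b : C) : in_disc a -> in_disc b -> seg_int g b a = (- seg_int g a b)%C.
Proof.
  intros Ha Hb.
  replace (seg_int g a b) with (seg_int g (seg a b 0) (seg a b 1)) by now rewrite seg_0, seg_1.
  replace (seg_int g b a) with (seg_int g (seg a b 1) (seg a b 0)) by now rewrite seg_0, seg_1.
  rewrite !seg_int_subseg, <- CR_oppE by (auto; lra).
  apply eq_sym, (@opp_RInt_swap C_R_CompleteNormedModule); apply ex_RInt_seg; auto; lra.
Qed.

Lemma seg_int_affine_err (a b al be c : C) (K : R) : in_disc a -> in_disc b ->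
  (forall s, 0 <= s <= 1 -> Cmod (g (seg a b s) - affine al be c (seg a b s)) <= K) ->
  Cmod (seg_int g a b - (affine_prim al be c b - affine_prim al be c a)) <= K * Cmod (b - a).
Proof.
  intros Ha Hb HK. rewrite <- CR_normE, <- CR_minusE.
  replace (K * Cmod (b - a)) with (scal (1 - 0) (K * Cmod (b - a)))
    by (unfold scal; simpl; unfold mult; simpl; ring).
  apply (@norm_RInt_le C_R_NormedModule
           (fun s => minus (g (seg a b s) * (b - a))%C (affine al be c (seg a b s) * (b - a))%C)
           (fun _ => K * Cmod (b - a)) 0 1); [lra | | |].
  - intros s Hs. rewrite CR_normE. change (minus ?x ?y) with (x - y)%C.
    replace (g (seg a b s) * (b - a) - affine al be c (seg a b s) * (b - a))%C
      with ((g (seg a b s) - affine al be c (seg a b s)) * (b - a))%C by ring.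
    rewrite Cmod_mult. apply Rmult_le_compat_r; [apply Cmod_ge_0 | auto].
  - apply (@is_RInt_minus C_R_NormedModule); [apply is_RInt_seg_int | apply is_RInt_seg_affine]; auto.
  - apply (@is_RInt_const R_NormedModule).
Qed.

End SegmentIntegrals.

(** * Goursat's theorem *)

Record triangle := Triangle { tA : C; tB : C; tC : C }.

Definition tri_int (g : C -> C) (T : triangle) : C :=
  (seg_int g (tA T) (tB T) + seg_int g (tB T) (tC T) + seg_int g (tC T) (tA T))%C.

Definition perimeter (T : triangle) : R :=
  Cmod (tB T - tA T) + Cmod (tC T - tB T) + Cmod (tA T - tC T).

Definition tri_in_ball (r : R) (T : triangle) : Prop :=
  Cmod (tA T) <= r /\ Cmod (tB T) <= r /\ Cmod (tC T) <= r.

Definition corner_A (T : triangle) := Triangle (tA T) (mid (tA T) (tB T)) (mid (tC T) (tA T)).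
Definition corner_B (T : triangle) := Triangle (mid (tA T) (tB T)) (tB T) (mid (tB T) (tC T)).
Definition corner_C (T : triangle) := Triangle (mid (tC T) (tA T)) (mid (tB T) (tC T)) (tC T).
Definition medial (T : triangle) :=
  Triangle (mid (tA T) (tB T)) (mid (tB T) (tC T)) (mid (tC T) (tA T)).

Lemma perimeter_ge_0 (T : triangle) : 0 <= perimeter T.
Proof.
  unfold perimeter.
  assert (H1 := Cmod_ge_0 (tB T - tA T)). assert (H2 := Cmod_ge_0 (tC T - tB T)).
  assert (H3 := Cmod_ge_0 (tA T - tC T)). lra.
Qed.

Lemma tri_in_ball_disc (r : R) (T : triangle) : r < 1 -> tri_in_ball r T ->
  in_disc (tA T) /\ in_disc (tB T) /\ in_disc (tC T).
Proof. unfold in_disc. intros Hr [Ha [Hb Hc]]. repeat split; lra. Qed.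

Definition is_quarter (T S : triangle) : Prop :=
  S = corner_A T \/ S = corner_B T \/ S = corner_C T \/ S = medial T.

Lemma perimeter_quarter (T S : triangle) : is_quarter T S -> perimeter S = perimeter T / 2.
Proof.
  destruct T as [a b c]. unfold perimeter.
  intros [-> | [-> | [-> | ->]]]; simpl.
  - rewrite mid_sub_l, mid_sub_mid, mid_sub_r, !Cmod_half. field.
  - rewrite mid_sub_r, mid_sub_l, mid_sub_mid, !Cmod_half. field.
  - rewrite mid_sub_mid, mid_sub_r, mid_sub_l, !Cmod_half. field.
  - rewrite (mid_comm a b), (mid_comm b c), (mid_comm c a), !mid_sub_mid, !Cmod_half.
    rewrite (Cmod_sub_sym c a), (Cmod_sub_sym a b), (Cmod_sub_sym b c). field.
Qed.

Lemma tri_in_ball_quarter (r : R) (T S : triangle) : is_quarter T S ->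
  tri_in_ball r T -> tri_in_ball r S.
Proof.
  destruct T as [a b c]. intros HS [Ha [Hb Hc]].
  assert (M : forall x y, Cmod x <= r -> Cmod y <= r -> Cmod (mid x y) <= r)
    by (intros; apply seg_le; auto; lra).
  destruct HS as [-> | [-> | [-> | ->]]]; repeat split; simpl; auto.
Qed.

Lemma quarter_vertex_near (T S : triangle) : is_quarter T S -> Cmod (tA S - tA T) <= perimeter T.
Proof.
  destruct T as [a b c]. unfold perimeter; simpl.
  assert (H1 := Cmod_ge_0 (b - a)). assert (H2 := Cmod_ge_0 (c - b)). assert (H3 := Cmod_ge_0 (a - c)).
  intros [-> | [-> | [-> | ->]]]; simpl.
  - replace (a - a)%C with (RtoC 0) by ring. rewrite Cmod_0. lra.
  - rewrite mid_sub_l, Cmod_half. lra.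
  - rewrite Cmod_sub_sym, mid_sub_r, Cmod_half. lra.
  - rewrite mid_sub_l, Cmod_half. lra.
Qed.

Lemma tri_int_quarters (g : C -> C) (r : R) (T : triangle) :
  Ccontinuous_on_disc g -> r < 1 -> tri_in_ball r T ->
  tri_int g T = (tri_int g (corner_A T) + tri_int g (corner_B T) + tri_int g (corner_C T)
                 + tri_int g (medial T))%C.
Proof.
  intros Hg Hr HT. destruct (tri_in_ball_disc r T Hr HT) as [Ha [Hb Hc]].
  destruct T as [a b c]. unfold tri_int; simpl in *.
  assert (M : forall x y, in_disc x -> in_disc y -> in_disc (mid x y))
    by (intros; apply seg_in_disc; auto; lra).
  rewrite (seg_int_split g Hg a b), (seg_int_split g Hg b c), (seg_int_split g Hg c a) by auto.
  rewrite (seg_int_swap g Hg (mid a b) (mid c a)), (seg_int_swap g Hg (mid b c) (mid a b)),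
    (seg_int_swap g Hg (mid c a) (mid b c)) by auto.
  ring.
Qed.

Definition goursat_step (g : C -> C) (T : triangle) : triangle :=
  let pick S other := if Rle_dec (Cmod (tri_int g T) / 4) (Cmod (tri_int g S)) then S else other in
  pick (corner_A T) (pick (corner_B T) (pick (corner_C T) (medial T))).

Lemma goursat_step_quarter (g : C -> C) (T : triangle) : is_quarter T (goursat_step g T).
Proof.
  unfold goursat_step, is_quarter.
  repeat destruct Rle_dec; auto.
Qed.

(* The integrals over the four quarters add up to [tri_int g T]. *)
Lemma goursat_step_int (g : C -> C) (r : R) (T : triangle) :
  Ccontinuous_on_disc g -> r < 1 -> tri_in_ball r T ->
  Cmod (tri_int g T) <= 4 * Cmod (tri_int g (goursat_step g T)).
Proof.
  intros Hg Hr HT. unfold goursat_step.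
  destruct Rle_dec as [H1|H1]; [lra|].
  destruct Rle_dec as [H2|H2]; [lra|].
  destruct Rle_dec as [H3|H3]; [lra|].
  destruct (Rle_dec (Cmod (tri_int g T) / 4) (Cmod (tri_int g (medial T)))) as [H4|H4]; [lra|].
  exfalso. apply Rnot_le_lt in H1, H2, H3, H4.
  assert (H := Cmod_triangle (tri_int g (corner_A T) + tri_int g (corner_B T)
                              + tri_int g (corner_C T)) (tri_int g (medial T))).
  assert (H' := Cmod_triangle (tri_int g (corner_A T) + tri_int g (corner_B T))
                               (tri_int g (corner_C T))).
  assert (H'' := Cmod_triangle (tri_int g (corner_A T)) (tri_int g (corner_B T))).
  rewrite <- (tri_int_quarters g r T Hg Hr HT) in H. lra.
Qed.

Fixpoint goursat_seq (g : C -> C) (T : triangle) (n : nat) : triangle :=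
  match n with O => T | S k => goursat_step g (goursat_seq g T k) end.

Section GoursatSequence.

Variables (g : C -> C) (T0 : triangle).

Lemma goursat_seq_in_ball (r : R) (n : nat) :
  tri_in_ball r T0 -> tri_in_ball r (goursat_seq g T0 n).
Proof.
  intros H. induction n as [|n IH]; simpl; auto.
  exact (tri_in_ball_quarter r _ _ (goursat_step_quarter g _) IH).
Qed.

Lemma perimeter_goursat_seq (n : nat) : perimeter (goursat_seq g T0 n) = perimeter T0 / 2 ^ n.
Proof.
  induction n as [|n IH]; simpl; [field|].
  rewrite (perimeter_quarter _ _ (goursat_step_quarter g _)), IH.
  field. apply pow_nonzero. lra.
Qed.

Lemma tri_int_goursat_seq (r : R) (n : nat) :
  Ccontinuous_on_disc g -> r < 1 -> tri_in_ball r T0 ->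
  Cmod (tri_int g T0) <= 4 ^ n * Cmod (tri_int g (goursat_seq g T0 n)).
Proof.
  intros Hg Hr HT. induction n as [|n IH]; simpl; [lra|].
  eapply Rle_trans; [exact IH|]. rewrite (Rmult_comm 4), Rmult_assoc.
  apply Rmult_le_compat_l; [apply pow_le; lra|].
  apply (goursat_step_int g r); auto. apply goursat_seq_in_ball; auto.
Qed.

(* The first vertices form a Cauchy sequence: each step moves by at most the
   current perimeter, and these perimeters sum to twice the first one. *)
Lemma goursat_seq_vertex_near (n k : nat) :
  Cmod (tA (goursat_seq g T0 (n + k)) - tA (goursat_seq g T0 n)) <=
  2 * perimeter (goursat_seq g T0 n) - 2 * perimeter (goursat_seq g T0 (n + k)).
Proof.
  induction k as [|k IH].
  - rewrite Nat.add_0_r, Rminus_diag. replace (_ - _)%C with (RtoC 0) by ring.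
    rewrite Cmod_0. lra.
  - rewrite Nat.add_succ_r. simpl.
    eapply Rle_trans; [apply (Cmod_sub_triangle _ (tA (goursat_seq g T0 (n + k))))|].
    assert (H := quarter_vertex_near _ _ (goursat_step_quarter g (goursat_seq g T0 (n + k)))).
    rewrite (perimeter_quarter _ _ (goursat_step_quarter g _)). lra.
Qed.

End GoursatSequence.

Lemma div_pow2_lt (c eps : R) : 0 < eps -> exists n, c / 2 ^ n < eps.
Proof.
  intros He.
  destruct (Pow_x_infinity 2 ltac:(rewrite Rabs_right; lra) (c / eps + 1)) as [N HN].
  exists N. specialize (HN N (le_n N)).
  assert (H2 : 0 < 2 ^ N) by (apply pow_lt; lra).
  rewrite Rabs_right in HN by lra.
  apply Rlt_div_l; [lra|].
  assert (E : eps * (c / eps + 1) = c + eps) by (field; lra). nra.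
Qed.

Lemma geometric_cauchy_limit (u : nat -> C) (c : R) :
  (forall n k, Cmod (u (n + k)%nat - u n) <= c / 2 ^ n) ->
  exists z, forall n, Cmod (z - u n) <= c / 2 ^ n.
Proof.
  intros Hu.
  set (F := filtermap u eventually).
  assert (HF : ProperFilter F) by (apply filtermap_proper_filter, eventually_filter).
  assert (Hcauchy : @cauchy C_UniformSpace F).
  { intros eps. destruct (div_pow2_lt c eps (cond_pos eps)) as [N HN].
    exists (u N), N. intros m Hm. apply (@norm_compat1 C_AbsRing C_NormedModule).
    replace m with (N + (m - N))%nat by lia. eapply Rle_lt_trans; [apply Hu | exact HN]. }
  exists (@lim C_CompleteNormedModule F). intros n. apply Rle_plus_epsilon. intros eps He.
  assert (Hk := @norm_factor_gt_0 C_AbsRing C_NormedModule).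
  set (k := @norm_factor C_AbsRing C_NormedModule) in *.
  assert (Hd : 0 < eps / k) by (apply Rdiv_lt_0_compat; auto).
  destruct (@complete_cauchy C_CompleteNormedModule F HF Hcauchy (mkposreal _ Hd)) as [N HN].
  specialize (HN (n + N)%nat ltac:(lia)).
  apply (@norm_compat2 C_AbsRing C_NormedModule) in HN. simpl in HN.
  fold k in HN. replace (k * (eps / k)) with eps in HN by (field; lra).
  eapply Rle_trans; [apply (Cmod_sub_triangle _ (u (n + N)%nat))|].
  rewrite Cmod_sub_sym. assert (H := Hu n N). change (Cmod (u (n + N)%nat - @lim C_CompleteNormedModule F) < eps) in HN.
  lra.
Qed.

Lemma goursat_limit_point (g : C -> C) (T0 : triangle) (r : R) : tri_in_ball r T0 ->
  exists z, Cmod z <= r /\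
    forall n, Cmod (z - tA (goursat_seq g T0 n)) <= 2 * perimeter (goursat_seq g T0 n).
Proof.
  intros HT.
  assert (Hp0 := perimeter_ge_0 T0). set (p0 := perimeter T0) in *.
  assert (Hpow : forall n, 0 < 2 ^ n) by (intros; apply pow_lt; lra).
  assert (E : forall n, 2 * perimeter (goursat_seq g T0 n) = 2 * p0 / 2 ^ n).
  { intros n. rewrite perimeter_goursat_seq. fold p0. field. apply Rgt_not_eq, Hpow. }
  destruct (geometric_cauchy_limit (fun n => tA (goursat_seq g T0 n)) (2 * p0)) as [z Hz].
  { intros n k. eapply Rle_trans; [apply goursat_seq_vertex_near|].
    rewrite <- E. assert (H := perimeter_ge_0 (goursat_seq g T0 (n + k))). lra. }
  exists z. split.
  - apply Rle_plus_epsilon. intros eps He.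
    destruct (div_pow2_lt (2 * p0) eps He) as [n Hn].
    destruct (goursat_seq_in_ball g T0 r n HT) as [HA _].
    replace z with ((z - tA (goursat_seq g T0 n)) + tA (goursat_seq g T0 n))%C by ring.
    eapply Rle_trans; [apply Cmod_triangle|]. specialize (Hz n). lra.
  - intros n. rewrite E. apply Hz.
Qed.

Lemma seg_sub_le (u v a : C) (s r : R) : 0 <= s <= 1 ->
  Cmod (u - a) <= r -> Cmod (v - a) <= r -> Cmod (seg u v s - a) <= r.
Proof.
  intros Hs Hu Hv. replace (seg u v s - a)%C with (seg (u - a) (v - a) s) by (unfold seg; ring).
  apply seg_le; auto.
Qed.

(* The affine part [g z + l (w - z)] has a primitive, so its integral around
   the closed triangle vanishes and only the [o(|w - z|)] remainder is left. *)
Lemma tri_int_near_derivative (g : C -> C) (T : triangle) (z l : C) (eta d : R) :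
  Ccontinuous_on_disc g -> in_disc (tA T) -> in_disc (tB T) -> in_disc (tC T) ->
  (forall w, Cmod (w - z) < d -> Cmod (g w - g z - l * (w - z)) <= eta * Cmod (w - z)) ->
  0 <= eta -> Cmod (z - tA T) <= 2 * perimeter T -> 3 * perimeter T < d ->
  Cmod (tri_int g T) <= 3 * eta * perimeter T * perimeter T.
Proof.
  intros Hg HA HB HC Hd Heta Hz Hpd.
  destruct T as [a b c]; simpl in *. set (p := perimeter (Triangle a b c)) in *.
  set (P := affine_prim (g z) l z).
  assert (edge : forall u v, in_disc u -> in_disc v -> Cmod (u - a) <= p -> Cmod (v - a) <= p ->
            Cmod (seg_int g u v - (P v - P u)) <= 3 * eta * p * Cmod (v - u)).
  { intros u v Hu Hv Hua Hva. apply seg_int_affine_err; auto.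
    intros s Hs. unfold affine.
    assert (Hw : Cmod (seg u v s - z) <= 3 * p).
    { eapply Rle_trans; [apply (Cmod_sub_triangle _ a)|].
      rewrite (Cmod_sub_sym a z). assert (H := seg_sub_le u v a s p Hs Hua Hva). lra. }
    replace (g (seg u v s) - (g z + l * (seg u v s - z)))%C
      with (g (seg u v s) - g z - l * (seg u v s - z))%C by ring.
    eapply Rle_trans; [apply Hd; lra|]. nra. }
  assert (Hab : Cmod (b - a) <= p) by (unfold p, perimeter; simpl;
    assert (H1 := Cmod_ge_0 (c - b)); assert (H2 := Cmod_ge_0 (a - c)); lra).
  assert (Hca : Cmod (c - a) <= p) by (rewrite Cmod_sub_sym; unfold p, perimeter; simpl;
    assert (H1 := Cmod_ge_0 (c - b)); assert (H2 := Cmod_ge_0 (b - a)); lra).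
  assert (Haa : Cmod (a - a) <= p).
  { replace (a - a)%C with (RtoC 0) by ring. rewrite Cmod_0. apply perimeter_ge_0. }
  assert (E1 := edge a b HA HB Haa Hab). assert (E2 := edge b c HB HC Hab Hca).
  assert (E3 := edge c a HC HA Hca Haa).
  unfold tri_int; simpl.
  replace (seg_int g a b + seg_int g b c + seg_int g c a)%C with
    ((seg_int g a b - (P b - P a)) + (seg_int g b c - (P c - P b))
     + (seg_int g c a - (P a - P c)))%C by ring.
  eapply Rle_trans; [apply Cmod_triangle|].
  eapply Rle_trans; [apply Rplus_le_compat_r, Cmod_triangle|].
  assert (Ep : p = Cmod (b - a) + Cmod (c - b) + Cmod (a - c)) by reflexivity.
  rewrite Ep at 2. lra.
Qed.

Theorem goursat (g : C -> C) (a b c : C) :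
  holomorphic_on_disc g -> in_disc a -> in_disc b -> in_disc c ->
  tri_int g (Triangle a b c) = 0%C.
Proof.
  intros Hh Ha Hb Hc. assert (Hg := holomorphic_continuous g Hh).
  set (T0 := Triangle a b c). set (r := Rmax (Cmod a) (Rmax (Cmod b) (Cmod c))).
  assert (Hr : r < 1) by (unfold r, in_disc in *; repeat apply Rmax_lub_lt; auto).
  assert (HT : tri_in_ball r T0).
  { unfold r. repeat split; simpl.
    - apply Rmax_l.
    - eapply Rle_trans; [apply Rmax_l | apply Rmax_r].
    - eapply Rle_trans; [apply Rmax_r | apply Rmax_r]. }
  destruct (goursat_limit_point g T0 r HT) as [z [Hzr Hz]].
  destruct (Hh z ltac:(unfold in_disc; lra)) as [l Hl].
  set (p0 := perimeter T0).
  apply Cmod_eq_0, Rle_antisym; [|apply Cmod_ge_0].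
  apply Rle_plus_epsilon. intros eps He. rewrite Rplus_0_l.
  set (D := 3 * p0 ^ 2 + 1).
  assert (HD : 0 < D) by (assert (H := pow2_ge_0 p0); unfold D; lra).
  set (eta := eps / D).
  assert (Heta : 0 < eta) by (apply Rdiv_lt_0_compat; lra).
  destruct (proj1 (is_Cderive_epsilon g z l) Hl eta Heta) as [d [Hd Hdw]].
  destruct (div_pow2_lt (3 * p0) d Hd) as [n Hn].
  set (Tn := goursat_seq g T0 n).
  assert (Hpn : perimeter Tn = p0 / 2 ^ n) by apply perimeter_goursat_seq.
  destruct (tri_in_ball_disc r Tn Hr (goursat_seq_in_ball g T0 r n HT)) as [HA [HB HC]].
  assert (Hloc := tri_int_near_derivative g Tn z l eta d Hg HA HB HC Hdw (Rlt_le _ _ Heta) (Hz n)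
                    ltac:(rewrite Hpn; unfold Rdiv in *; lra)).
  assert (E : 4 ^ n * (perimeter Tn * perimeter Tn) = p0 ^ 2).
  { rewrite Hpn. replace 4 with (2 * 2) by ring. rewrite Rpow_mult_distr.
    field. apply pow_nonzero. lra. }
  assert (Heps : 3 * eta * p0 ^ 2 <= eps).
  { replace (3 * eta * p0 ^ 2) with (eps - eta) by (unfold eta, D in *; field; lra). lra. }
  eapply Rle_trans; [apply (tri_int_goursat_seq g T0 r n Hg Hr HT)|].
  eapply Rle_trans; [apply Rmult_le_compat_l; [apply pow_le; lra | exact Hloc]|].
  replace (4 ^ n * (3 * eta * perimeter Tn * perimeter Tn))
    with (3 * eta * (4 ^ n * (perimeter Tn * perimeter Tn))) by ring.
  rewrite E. exact Heps.
Qed.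

Lemma seg_int_from_0_sub (g : C -> C) (z w : C) :
  holomorphic_on_disc g -> in_disc z -> in_disc w ->
  (seg_int g 0 w - seg_int g 0 z)%C = seg_int g z w.
Proof.
  intros Hh Hz Hw.
  assert (T := goursat g 0 z w Hh in_disc_0 Hz Hw). unfold tri_int in T; simpl in T.
  rewrite (seg_int_swap g (holomorphic_continuous g Hh) 0 w in_disc_0 Hw) in T.
  replace (seg_int g z w) with ((seg_int g 0 z + seg_int g z w + - seg_int g 0 w)
                                 + (seg_int g 0 w - seg_int g 0 z))%C by ring.
  rewrite T. ring.
Qed.

Lemma is_Cderive_seg_int (g : C -> C) (z : C) : holomorphic_on_disc g -> in_disc z ->
  is_Cderive (fun w => seg_int g 0 w) z (g z).
Proof.
  intros Hh Hz. assert (Hg := holomorphic_continuous g Hh).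
  apply is_Cderive_epsilon. intros eps He.
  destruct (Hg z Hz eps He) as [d [Hd Hc]].
  exists (Rmin d (1 - Cmod z)). split; [apply Rmin_pos; unfold in_disc in Hz; lra|].
  intros w Hw.
  assert (Hw1 : Cmod (w - z) < d) by (eapply Rlt_le_trans; [exact Hw | apply Rmin_l]).
  assert (Hwd : in_disc w).
  { assert (Hw2 : Cmod (w - z) < 1 - Cmod z) by (eapply Rlt_le_trans; [exact Hw | apply Rmin_r]).
    unfold in_disc. replace w with (z + (w - z))%C by ring.
    eapply Rle_lt_trans; [apply Cmod_triangle | lra]. }
  rewrite (seg_int_from_0_sub g z w Hh Hz Hwd).
  replace (seg_int g z w - g z * (w - z))%C
    with (seg_int g z w - (affine_prim (g z) 0 z w - affine_prim (g z) 0 z z))%C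
    by (unfold affine_prim; ring).
  apply seg_int_affine_err; auto.
  intros s Hs. unfold affine.
  replace (g (seg z w s) - (g z + 0 * (seg z w s - z)))%C with (g (seg z w s) - g z)%C by ring.
  left. apply Hc. eapply Rle_lt_trans; [apply seg_sub_start_le; auto | exact Hw1].
Qed.

(** * The Cesaro operator *)

Definition cesaro_density (t : R) (f : C -> C) (w : C) : C :=
  Cdiv (f w) (Cminus (RtoC 1) (Cmult (RtoC t) w)).

Lemma Cmod_one_sub_scal_ge (t : R) (w : C) : 0 <= t ->
  1 - t * Cmod w <= Cmod (RtoC 1 - RtoC t * w)%C.
Proof.
  intros Ht. assert (H := Cmod_sub_lower (RtoC 1 - RtoC t * w)%C (RtoC 1)).
  replace (RtoC 1 - RtoC t * w - RtoC 1)%C with (- (RtoC t * w))%C in H by ring.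
  rewrite Cmod_1, Cmod_opp, Cmod_mult, Cmod_RtoC_nonneg in H by lra. lra.
Qed.

Lemma one_sub_scal_neq_0 (t : R) (w : C) : 0 <= t <= 1 -> in_disc w ->
  (RtoC 1 - RtoC t * w)%C <> 0%C.
Proof.
  intros Ht Hw. apply Cmod_gt_0. eapply Rlt_le_trans; [|apply Cmod_one_sub_scal_ge; lra].
  assert (H := Cmod_ge_0 w). unfold in_disc in Hw. nra.
Qed.

Lemma cesaro_density_holomorphic (t : R) (f : C -> C) : 0 <= t <= 1 ->
  holomorphic_on_disc f -> holomorphic_on_disc (cesaro_density t f).
Proof.
  intros Ht Hf z Hz. destruct (Hf z Hz) as [df Hdf].
  assert (Hden : is_Cderive (fun w => RtoC 1 - RtoC t * w)%C z (- RtoC t)%C).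
  { apply (@is_derive_ext C_AbsRing C_NormedModule (fun w => RtoC 1 + (- RtoC t) * w)%C);
      [intros w; C_eq; ring | apply is_Cderive_affine]. }
  eexists. apply is_Cderive_mult; [exact Hdf|].
  apply (is_Cderive_comp Cinv); [|exact Hden].
  apply is_Cderive_inv, one_sub_scal_neq_0; auto.
Qed.

Lemma cesaro_at_0 (t : R) (f : C -> C) : cesaro t f 0%C = f 0%C.
Proof.
  unfold cesaro. destruct (Req_EM_T (Cmod 0) 0) as [E|E]; [reflexivity|].
  exfalso. apply E, Cmod_0.
Qed.

Lemma cesaro_seg_int (t : R) (f : C -> C) (z : C) : z <> 0%C ->
  cesaro t f z = (/ z * seg_int (cesaro_density t f) 0 z)%C.
Proof.
  intros Hz. unfold cesaro. destruct (Req_EM_T (Cmod z) 0) as [E|E].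
  { exfalso. apply Hz, Cmod_eq_0, E. }
  f_equal. apply (@RInt_ext C_R_CompleteNormedModule). intros s _.
  unfold cesaro_density. replace (seg 0 z s) with (RtoC s * z)%C by (unfold seg; ring).
  replace (z - 0)%C with z by ring. reflexivity.
Qed.

Lemma cesaro_density_at_0 (t : R) (f : C -> C) : cesaro_density t f 0%C = f 0%C.
Proof.
  unfold cesaro_density. replace (RtoC 1 - RtoC t * 0)%C with (RtoC 1) by ring.
  unfold Cdiv. rewrite <- RtoC_inv, Rinv_1 by lra. ring.
Qed.

(* [cesaro t f z = / z * G z] with [G] a primitive of the density, by Goursat. *)
Lemma ex_derive_cesaro_neq_0 (t : R) (f : C -> C) (z : C) :
  0 <= t <= 1 -> holomorphic_on_disc f -> in_disc z -> z <> 0%C ->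
  ex_derive (K := C_AbsRing) (V := C_NormedModule) (cesaro t f) z.
Proof.
  intros Ht Hf Hz Hz0.
  assert (Hd := is_Cderive_mult Cinv (fun w => seg_int (cesaro_density t f) 0 w) z _ _
                  (is_Cderive_inv z Hz0)
                  (is_Cderive_seg_int _ z (cesaro_density_holomorphic t f Ht Hf) Hz)).
  eexists. apply (@is_derive_ext_loc C_AbsRing C_NormedModule) with (2 := Hd).
  assert (Hp : 0 < Cmod z) by (apply Cmod_gt_0; auto).
  exists (mkposreal _ Hp). intros y Hy. symmetry. apply cesaro_seg_int.
  intros ->. change (Cmod (0 - z) < Cmod z) in Hy.
  rewrite Cmod_sub_sym in Hy. replace (z - 0)%C with z in Hy by ring. lra.
Qed.

(* Near [0], [cesaro t f w] is the mean of the density over [[0, w]], whose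
   affine part [h 0 + l xi] has mean [h 0 + l w / 2]. *)
Lemma ex_derive_cesaro_0 (t : R) (f : C -> C) :
  0 <= t <= 1 -> holomorphic_on_disc f ->
  ex_derive (K := C_AbsRing) (V := C_NormedModule) (cesaro t f) (RtoC 0).
Proof.
  intros Ht Hf.
  set (h := cesaro_density t f).
  assert (Hh := cesaro_density_holomorphic t f Ht Hf). fold h in Hh.
  destruct (Hh 0%C in_disc_0) as [l Hl].
  exists (RtoC (1/2) * l)%C. apply is_Cderive_epsilon. intros eps He.
  destruct (proj1 (is_Cderive_epsilon _ _ _) Hl eps He) as [d [Hd Hdw]].
  exists (Rmin d 1). split; [apply Rmin_pos; lra|].
  intros w Hw. replace (w - 0)%C with w in * by ring.
  assert (Hwd : Cmod w < d) by (eapply Rlt_le_trans; [exact Hw | apply Rmin_l]).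
  assert (Hw1 : in_disc w) by (eapply Rlt_le_trans; [exact Hw | apply Rmin_r]).
  rewrite cesaro_at_0.
  destruct (Ceq_dec w 0) as [-> | Hw0].
  { rewrite cesaro_at_0, Cmod_0. replace (f 0 - f 0 - RtoC (1 / 2) * l * 0)%C with (RtoC 0) by ring.
    rewrite Cmod_0. lra. }
  rewrite cesaro_seg_int, <- (cesaro_density_at_0 t f) by auto. fold h.
  replace (/ w * seg_int h 0 w - h 0 - RtoC (1 / 2) * l * w)%C with
    (/ w * (seg_int h 0 w - (affine_prim (h 0) l 0 w - affine_prim (h 0) l 0 0)))%C
    by (unfold affine_prim; field; auto).
  assert (Hpw : 0 < Cmod w) by (apply Cmod_gt_0; auto).
  rewrite Cmod_mult, Cmod_inv by auto.
  assert (B : Cmod (seg_int h 0 w - (affine_prim (h 0) l 0 w - affine_prim (h 0) l 0 0))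
              <= (eps * Cmod w) * Cmod (w - 0)).
  { apply seg_int_affine_err; auto using holomorphic_continuous, in_disc_0.
    intros s Hs. unfold affine.
    assert (Hs1 := seg_sub_start_le 0 w s Hs). replace (w - 0)%C with w in Hs1 by ring.
    replace (h (seg 0 w s) - (h 0 + l * (seg 0 w s - 0)))%C with
      (h (seg 0 w s) - h 0 - l * (seg 0 w s - 0))%C by ring.
    eapply Rle_trans; [apply Hdw; lra|]. apply Rmult_le_compat_l; lra. }
  replace (w - 0)%C with w in B by ring.
  apply Rle_trans with (/ Cmod w * (eps * Cmod w * Cmod w)).
  - apply Rmult_le_compat_l; [apply Rlt_le, Rinv_0_lt_compat; auto | exact B].
  - right. field. lra.
Qed.

Lemma cesaro_holomorphic (t : R) (f : C -> C) : 0 <= t <= 1 ->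
  holomorphic_on_disc f -> holomorphic_on_disc (cesaro t f).
Proof.
  intros Ht Hf z Hz. destruct (Ceq_dec z 0) as [-> | Hz0].
  - apply ex_derive_cesaro_0; auto.
  - apply ex_derive_cesaro_neq_0; auto.
Qed.

Lemma cesaro_minus (t : R) (f g : C -> C) (z : C) : 0 <= t <= 1 ->
  holomorphic_on_disc f -> holomorphic_on_disc g -> in_disc z ->
  (cesaro t g z - cesaro t f z)%C = cesaro t (fun w => g w - f w)%C z.
Proof.
  intros Ht Hf Hg Hz. destruct (Ceq_dec z 0) as [-> | Hz0].
  { rewrite !cesaro_at_0. reflexivity. }
  rewrite !cesaro_seg_int by auto.
  replace (/ z * seg_int (cesaro_density t g) 0 z - / z * seg_int (cesaro_density t f) 0 z)%C
    with (/ z * (seg_int (cesaro_density t g) 0 z - seg_int (cesaro_density t f) 0 z))%C by ring.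
  f_equal. unfold seg_int.
  rewrite <- CR_minusE, <- (@RInt_minus C_R_CompleteNormedModule).
  - apply (@RInt_ext C_R_CompleteNormedModule). intros s _.
    rewrite CR_minusE. unfold cesaro_density, Cdiv. C_eq; ring.
  - apply ex_RInt_seg; auto using holomorphic_continuous, cesaro_density_holomorphic, in_disc_0; lra.
  - apply ex_RInt_seg; auto using holomorphic_continuous, cesaro_density_holomorphic, in_disc_0; lra.
Qed.

Definition cesaro_bound (t : R) : R := RInt (fun s => / (1 - t * s)) 0 1.

Lemma is_RInt_cesaro_bound (t : R) : 0 <= t < 1 ->
  is_RInt (fun s => / (1 - t * s)) 0 1 (cesaro_bound t).
Proof.
  intros Ht. apply (@RInt_correct R_CompleteNormedModule), (@ex_RInt_continuous R_CompleteNormedModule).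
  intros s Hs. rewrite Rmin_left, Rmax_right in Hs by lra.
  apply (ex_derive_continuous (K := R_AbsRing) (V := R_NormedModule)).
  auto_derive. nra.
Qed.

Lemma is_RInt_one : is_RInt (fun _ => 1) 0 1 1.
Proof.
  assert (H := @is_RInt_const R_NormedModule 0 1 1).
  rewrite scal_R_mult, Rminus_0_r, Rmult_1_r in H. exact H.
Qed.

Lemma cesaro_bound_0 : cesaro_bound 0 = 1.
Proof.
  apply (@is_RInt_unique R_CompleteNormedModule).
  apply (@is_RInt_ext R_NormedModule (fun _ => 1)); [|exact is_RInt_one].
  intros s _. rewrite Rmult_0_l, Rminus_0_r, Rinv_1. reflexivity.
Qed.

Lemma cesaro_bound_log (t : R) : 0 < t < 1 -> cesaro_bound t = - ln (1 - t) / t.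
Proof.
  intros Ht. apply (@is_RInt_unique R_CompleteNormedModule).
  replace (- ln (1 - t) / t) with (minus (- ln (1 - t * 1) / t) (- ln (1 - t * 0) / t))
    by (unfold minus, plus, opp; simpl; rewrite Rmult_0_r, Rmult_1_r, Rminus_0_r, ln_1; field; lra).
  apply (@is_RInt_derive R_CompleteNormedModule (fun s => - ln (1 - t * s) / t)).
  - intros s Hs. rewrite Rmin_left, Rmax_right in Hs by lra.
    auto_derive; [nra|]. field. split; nra.
  - intros s Hs. rewrite Rmin_left, Rmax_right in Hs by lra.
    apply (ex_derive_continuous (K := R_AbsRing) (V := R_NormedModule)). auto_derive. nra.
Qed.

Lemma cesaro_bound_ge_1 (t : R) : 0 <= t < 1 -> 1 <= cesaro_bound t.
Proof.
  intros Ht. apply (is_RInt_le (fun _ => 1) (fun s => / (1 - t * s)) 0 1); [lra | | |].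
  - exact is_RInt_one.
  - apply is_RInt_cesaro_bound; auto.
  - intros s Hs. rewrite <- Rinv_1 at 1. apply Rinv_le_contravar; nra.
Qed.

Lemma cesaro_bound_left_limit (t b : R) : 0 <= t < 1 -> b < cesaro_bound t ->
  exists r, 0 <= r < 1 /\ b < cesaro_bound (t * r).
Proof.
  intros Ht Hb. destruct (Req_dec t 0) as [-> | Ht0].
  { exists 0. rewrite Rmult_0_l. split; [lra | exact Hb]. }
  assert (Htp : 0 < t < 1) by lra. rewrite cesaro_bound_log in Hb by auto.
  assert (Hc : continuous (fun r => - ln (1 - t * r) / (t * r)) 1).
  { apply (ex_derive_continuous (K := R_AbsRing) (V := R_NormedModule)).
    auto_derive. split; [nra | split; nra]. }
  assert (He : 0 < - ln (1 - t) / t - b) by lra.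
  destruct (Hc _ (locally_ball _ (mkposreal _ He))) as [d Hd].
  assert (Hd0 := cond_pos d).
  set (r := Rmax (1/2) (1 - d / 2)).
  assert (Hr : 1/2 <= r /\ 1 - d / 2 <= r /\ r < 1)
    by (unfold r; repeat split; [apply Rmax_l | apply Rmax_r | apply Rmax_lub_lt; lra]).
  exists r. split; [lra|].
  rewrite cesaro_bound_log by nra.
  specialize (Hd r). simpl in Hd.
  assert (Hb1 : ball 1 d r) by (change (Rabs (r - 1) < d); rewrite Rabs_left; lra).
  specialize (Hd Hb1).
  change (Rabs (- ln (1 - t * r) / (t * r) - - ln (1 - t * 1) / (t * 1)) < - ln (1 - t) / t - b) in Hd.
  rewrite !Rmult_1_r in Hd. apply Rabs_def2 in Hd. lra.
Qed.

Lemma Cmod_cesaro_le (t M : R) (f : C -> C) (z : C) : 0 <= t < 1 ->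
  holomorphic_on_disc f -> (forall w, in_disc w -> Cmod (f w) <= M) -> in_disc z ->
  Cmod (cesaro t f z) <= M * cesaro_bound t.
Proof.
  intros Ht Hf HM Hz.
  assert (HM0 : 0 <= M) by (eapply Rle_trans; [apply Cmod_ge_0 | apply (HM 0%C in_disc_0)]).
  assert (HK := cesaro_bound_ge_1 t Ht).
  destruct (Ceq_dec z 0) as [-> | Hz0].
  { rewrite cesaro_at_0. eapply Rle_trans; [apply HM, in_disc_0 | nra]. }
  assert (Hpz : 0 < Cmod z) by (apply Cmod_gt_0; auto).
  rewrite cesaro_seg_int, Cmod_mult, Cmod_inv by auto.
  apply Rle_trans with (/ Cmod z * (Cmod z * M * cesaro_bound t)); [|right; field; lra].
  apply Rmult_le_compat_l; [apply Rlt_le, Rinv_0_lt_compat; auto|].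
  rewrite <- CR_normE.
  apply (@norm_RInt_le C_R_NormedModule
           (fun s => (cesaro_density t f (seg 0 z s) * (z - 0))%C)
           (fun s => scal (Cmod z * M) (/ (1 - t * s))) 0 1); [lra | | |].
  - intros s Hs. rewrite CR_normE, scal_R_mult, Cmod_mult.
    replace (seg 0 z s) with (RtoC s * z)%C by (unfold seg; ring).
    replace (z - 0)%C with z by ring.
    assert (Hsz : in_disc (RtoC s * z)).
    { unfold in_disc in *. assert (H := Cmod_scal_le s z Hs). lra. }
    assert (Hts : 0 < 1 - t * s) by nra.
    assert (Hden : 1 - t * s <= Cmod (RtoC 1 - RtoC t * (RtoC s * z))).
    { eapply Rle_trans; [|apply Cmod_one_sub_scal_ge; lra].
      assert (Cmod (RtoC s * z) <= s)
        by (rewrite Cmod_mult, Cmod_RtoC_nonneg by lra; unfold in_disc in Hz; nra).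
      nra. }
    unfold cesaro_density. rewrite Cmod_div by (apply one_sub_scal_neq_0; [lra | exact Hsz]).
    apply Rle_trans with (M / (1 - t * s) * Cmod z); [|right; field; lra].
    apply Rmult_le_compat_r; [apply Cmod_ge_0|]. unfold Rdiv.
    apply Rmult_le_compat; [apply Cmod_ge_0 | apply Rlt_le, Rinv_0_lt_compat; lra | auto |].
    apply Rinv_le_contravar; lra.
  - apply is_RInt_seg_int; [apply holomorphic_continuous, cesaro_density_holomorphic; [lra | auto]
                           | apply in_disc_0 | auto].
  - rewrite <- scal_R_mult. apply (@is_RInt_scal R_NormedModule), is_RInt_cesaro_bound; auto.
Qed.

Lemma cesaro_one_real (t r : R) : 0 <= t < 1 -> 0 <= r < 1 ->
  cesaro t (fun _ => RtoC 1) (RtoC r) = RtoC (cesaro_bound (t * r)).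
Proof.
  intros Ht Hr. destruct (Req_dec r 0) as [-> | Hr0].
  { rewrite cesaro_at_0, Rmult_0_r, cesaro_bound_0. reflexivity. }
  assert (Hrz : RtoC r <> 0%C) by (intros E; apply RtoC_inj in E; auto).
  rewrite cesaro_seg_int by auto.
  replace (seg_int (cesaro_density t (fun _ => RtoC 1)) 0 (RtoC r))
    with (RtoC (r * cesaro_bound (t * r))).
  { rewrite RtoC_mult. field. auto. }
  symmetry. apply (@is_RInt_unique C_R_CompleteNormedModule).
  apply (@is_RInt_ext C_R_NormedModule (fun s => (RtoC (r * / (1 - t * r * s))))).
  - intros s Hs. rewrite Rmin_left, Rmax_right in Hs by lra.
    assert (Htr : 0 <= t * r < 1) by nra.
    assert (Hd : 1 - t * r * s <> 0) by nra.
    unfold cesaro_density, Cdiv.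
    replace (seg 0 (RtoC r) s) with (RtoC (s * r)) by (unfold seg; rewrite RtoC_mult; ring).
    replace (RtoC 1 - RtoC t * RtoC (s * r))%C with (RtoC (1 - t * (s * r)))
      by (rewrite RtoC_minus, RtoC_mult; ring).
    replace (RtoC r - 0)%C with (RtoC r) by ring.
    rewrite <- RtoC_inv, <- !RtoC_mult by nra. f_equal. field. nra.
  - apply (@is_RInt_fct_extend_pair R_NormedModule R_NormedModule).
    + simpl. apply (@is_RInt_scal R_NormedModule (fun s => / (1 - t * r * s))).
      apply is_RInt_cesaro_bound. split; nra.
    + simpl. assert (H := @is_RInt_const R_NormedModule 0 1 0).
      rewrite scal_R_mult, Rmult_0_r in H. exact H.
Qed.

(** * Operator norm *)

Lemma supnorm_spec (h : C -> C) (M : R) : (forall z, in_disc z -> Cmod (h z) <= M) ->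
  (forall z, in_disc z -> Cmod (h z) <= supnorm h) /\
  (forall B, (forall z, in_disc z -> Cmod (h z) <= B) -> supnorm h <= B).
Proof.
  intros HM. unfold supnorm.
  set (E := fun r => exists z : C, in_disc z /\ r = Cmod (h z)).
  destruct (Lub_Rbar_correct E) as [Hub Hleast].
  assert (HE : forall B, (forall z, in_disc z -> Cmod (h z) <= B) -> is_ub_Rbar E B).
  { intros B HB x [z [Hz ->]]. apply HB, Hz. }
  destruct (Lub_Rbar E) as [r | |]; simpl.
  - split.
    + intros z Hz. exact (Hub _ (ex_intro _ z (conj Hz eq_refl))).
    + intros B HB. exact (Hleast B (HE B HB)).
  - destruct (Hleast M (HE M HM)).
  - destruct (Hub _ (ex_intro _ (RtoC 0) (conj in_disc_0 eq_refl))).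
Qed.

Lemma supnorm_ub (h : C -> C) (z : C) : (exists M, forall w, in_disc w -> Cmod (h w) <= M) ->
  in_disc z -> Cmod (h z) <= supnorm h.
Proof. intros [M HM]. exact (proj1 (supnorm_spec h M HM) z). Qed.

Lemma supnorm_le (h : C -> C) (B : R) : (forall z, in_disc z -> Cmod (h z) <= B) -> supnorm h <= B.
Proof. intros HB. exact (proj2 (supnorm_spec h B HB) B HB). Qed.

Lemma Hinf_Cmod_le_supnorm (f : C -> C) (z : C) : Hinf f -> in_disc z -> Cmod (f z) <= supnorm f.
Proof. intros [_ Hb]. apply supnorm_ub, Hb. Qed.

Lemma Hinf_minus (f g : C -> C) : Hinf f -> Hinf g -> Hinf (fun w => g w - f w)%C.
Proof.
  intros [Hf [Mf HMf]] [Hg [Mg HMg]]. split.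
  - intros z Hz. destruct (Hf z Hz) as [df Hdf]. destruct (Hg z Hz) as [dg Hdg].
    exists (minus dg df). exact (@is_derive_minus C_AbsRing C_NormedModule g f z dg df Hdg Hdf).
  - exists (Mg + Mf). intros w Hw.
    eapply Rle_trans; [apply Cmod_triangle|]. rewrite Cmod_opp.
    apply Rplus_le_compat; auto.
Qed.

Lemma Hinf_one : Hinf (fun _ => RtoC 1).
Proof.
  split.
  - intros z _. exists zero. apply (@is_derive_const C_AbsRing C_NormedModule).
  - exists 1. intros z _. rewrite Cmod_1. lra.
Qed.

Lemma supnorm_cesaro_le (t : R) (f : C -> C) : 0 <= t < 1 -> Hinf f ->
  supnorm (cesaro t f) <= supnorm f * cesaro_bound t.
Proof.
  intros Ht Hf. apply supnorm_le. intros z Hz.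
  apply Cmod_cesaro_le; auto. apply Hf. intros w Hw. apply Hinf_Cmod_le_supnorm; auto.
Qed.

Lemma cesaro_Hinf (t : R) (f : C -> C) : 0 <= t < 1 -> Hinf f -> Hinf (cesaro t f).
Proof.
  intros Ht Hf. split.
  - apply cesaro_holomorphic; [lra | apply Hf].
  - exists (supnorm f * cesaro_bound t). intros z Hz.
    apply Cmod_cesaro_le; auto. apply Hf. intros w Hw. apply Hinf_Cmod_le_supnorm; auto.
Qed.

Lemma supnorm_cesaro_minus_le (t : R) (f g : C -> C) : 0 <= t < 1 -> Hinf f -> Hinf g ->
  supnorm (fun z => cesaro t g z - cesaro t f z)%C
  <= supnorm (fun z => g z - f z)%C * cesaro_bound t.
Proof.
  intros Ht Hf Hg. apply supnorm_le. intros z Hz.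
  assert (Hgf := Hinf_minus f g Hf Hg).
  rewrite cesaro_minus; [| lra | apply Hf | apply Hg | exact Hz].
  apply Cmod_cesaro_le; [exact Ht | apply Hgf | | exact Hz].
  intros w Hw. exact (Hinf_Cmod_le_supnorm (fun z => g z - f z)%C w Hgf Hw).
Qed.

Lemma cesaro_opnorm (t : R) : 0 <= t < 1 -> cesaro_opnorm_is t (cesaro_bound t).
Proof.
  intros Ht. assert (HK := cesaro_bound_ge_1 t Ht). split.
  - intros x [f [Hf [Hf1 ->]]].
    eapply Rle_trans; [apply supnorm_cesaro_le; auto | nra].
  - intros b Hb. apply Rnot_lt_le. intros Hlt.
    destruct (cesaro_bound_left_limit t b Ht Hlt) as [r [Hr Hbr]].
    assert (Hr' : in_disc (RtoC r)) by (unfold in_disc; rewrite Cmod_RtoC_nonneg; lra).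
    assert (H1 : cesaro_bound (t * r) <= supnorm (cesaro t (fun _ => RtoC 1))).
    { rewrite <- (Cmod_RtoC_nonneg (cesaro_bound (t * r))), <- cesaro_one_real by
        (auto || (assert (1 <= cesaro_bound (t * r)) by (apply cesaro_bound_ge_1; split; nra); lra)).
      apply Hinf_Cmod_le_supnorm; [apply cesaro_Hinf, Hinf_one; auto | exact Hr']. }
    assert (H2 : supnorm (cesaro t (fun _ => RtoC 1)) <= b).
    { apply Hb. exists (fun _ => RtoC 1). split; [exact Hinf_one | split; [|reflexivity]].
      apply supnorm_le. intros z _. rewrite Cmod_1. lra. }
    lra.
Qed.

Theorem proposition2p3 :
  (forall t : R, 0 <= t < 1 ->
     (forall f : C -> C, Hinf f -> Hinf (cesaro t f)) /\
     (forall f : C -> C, Hinf f ->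
        forall eps : R, 0 < eps -> exists delta : R, 0 < delta /\
          forall g : C -> C, Hinf g ->
            supnorm (fun z => Cminus (g z) (f z)) < delta ->
            supnorm (fun z => Cminus (cesaro t g z) (cesaro t f z)) < eps)) /\
  cesaro_opnorm_is 0 1 /\
  (forall t : R, 0 < t < 1 -> cesaro_opnorm_is t (- ln (1 - t) / t)).
Proof.
  split; [|split].
  - intros t Ht. split; [intros f; apply cesaro_Hinf; auto|].
    intros f Hf eps He. assert (HK := cesaro_bound_ge_1 t Ht).
    exists (eps / cesaro_bound t). split; [apply Rdiv_lt_0_compat; lra|].
    intros g Hg Hgf. eapply Rle_lt_trans; [apply supnorm_cesaro_minus_le; auto|].
    apply Rlt_div_r in Hgf; lra.
  - rewrite <- cesaro_bound_0. apply cesaro_opnorm. lra.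
  - intros t Ht. rewrite <- cesaro_bound_log by auto. apply cesaro_opnorm. lra.
Qed.
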